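(* Let $z_1,\ldots,z_N$ be distinct points on the unit circle in $\mathbb{C}$. Then there exists $p_0\in\{1,\ldots,N\}$ such that $$\prod_{q\ne p_0}|z_{p_0}-z_q|\le N.$$ *)

(* The complex plane is modelled by an arbitrary
   numClosedFieldType C (algebraically closed field with conjugation and norm,
   e.g. algC); the norm `|_| is the complex modulus. *)
From HB Require Import structures.
From mathcomp Require Import all_boot all_order all_algebra.
Set Implicit Arguments. Unset Strict Implicit. Unset Printing Implicit Defensive.

From HB Require Import structures.
From mathcomp Require Import all_boot all_order all_algebra.
Set Implicit Arguments. Unset Strict Implicit. Unset Printing Implicit Defensive.
Import Order.TTheory GRing.Theory Num.Theory.
Local Open Scope ring_scope.

(* For distinct nodes z_1, ..., z_N of a field, write
   d_p = prod_(q <> p) (z_p - z_q) and L_p = prod_(q <> p) (X - z_q).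
   Lagrange interpolation says that every polynomial P of size at most N
   (degree < N) equals sum_p P(z_p)/d_p * L_p; comparing the coefficients of
   X^(N-1), whose coefficient in each monic L_p is 1, gives
       sum_p P(z_p) / d_p = coefficient of X^(N-1) in P.
   For P = X^(N-1) this is the identity sum_p z_p^(N-1) / d_p = 1.
   A sum of N numbers equal to 1 has a term of modulus at least 1/N; when the
   z_p lie on the unit circle that term has modulus 1/|d_p|, so |d_p| <= N,
   which is the theorem. *)

Section LagrangeInterpolation.

Variables (F : fieldType) (N : nat) (z : 'I_N -> F).
Hypothesis z_inj : injective z.

(* The product of the differences between the node z p and the other nodes;
   over the complex numbers this is the derivative at z p of prod_q (X - z q). *)
Definition node_gap (p : 'I_N) : F := \prod_(q < N | q != p) (z p - z q).

Definition lagrange_factor (p : 'I_N) : {poly F} :=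
  \prod_(q < N | q != p) ('X - (z q)%:P).

Lemma size_lagrange_factor (p : 'I_N) : size (lagrange_factor p) = N.
Proof.
rewrite /lagrange_factor -big_filter size_prod_XsubC size_filter.
have := cardC1 p; rewrite card_ord cardE /enum_mem size_filter => ->.
by rewrite prednK // (leq_ltn_trans (leq0n p) (ltn_ord p)).
Qed.

Lemma coef_lagrange_factor (p : 'I_N) : (lagrange_factor p)`_N.-1 = 1.
Proof.
have := lead_coef_prod_XsubC (index_enum 'I_N) (fun q => q != p) z.
by rewrite lead_coefE -/(lagrange_factor p) size_lagrange_factor.
Qed.

Lemma node_gap_neq0 (p : 'I_N) : node_gap p != 0.
Proof.
rewrite /node_gap prodf_seq_neq0; apply/allP => q _; apply/implyP => qp.
by rewrite subr_eq0; apply: contra qp => /eqP/z_inj ->.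
Qed.

Lemma horner_lagrange_factor (p j : 'I_N) :
  (lagrange_factor p).[z j] = if p == j then node_gap p else 0.
Proof.
rewrite /lagrange_factor horner_prod; case: eqP => [<-|/eqP pj].
  by apply: eq_bigr => q _; rewrite hornerXsubC.
rewrite (bigD1 j) /=; last by rewrite eq_sym.
by rewrite hornerXsubC subrr mul0r.
Qed.

Lemma lagrange_interpolation (P : {poly F}) : (size P <= N)%N ->
  P = \sum_(p < N) (P.[z p] / node_gap p) *: lagrange_factor p.
Proof.
move=> sizeP; apply/esym/eqP; rewrite -subr_eq0; apply/eqP.
set g := _ - P.
apply: (@roots_geq_poly_eq0 _ g [seq z i | i <- enum 'I_N]).
- apply/allP => _ /mapP [j _ ->].
  rewrite /root /g hornerD hornerN horner_sum (bigD1 j) //= big1; last first.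
    by move=> p /negbTE pj; rewrite hornerZ horner_lagrange_factor pj mulr0.
  by rewrite hornerZ horner_lagrange_factor eqxx addr0 divfK ?node_gap_neq0 // subrr.
- by rewrite map_inj_uniq ?enum_uniq.
- rewrite size_map size_enum_ord /g.
  apply: (leq_trans (size_polyD _ _)); rewrite geq_max size_polyN sizeP andbT.
  apply: (leq_trans (size_sum _ _ _)); apply/bigmax_leqP => p _.
  by apply: (leq_trans (size_scale_leq _ _)); rewrite size_lagrange_factor.
Qed.

(* Comparing coefficients of X^(N-1) in the interpolation formula. *)
Lemma sum_horner_div_node_gap (P : {poly F}) : (size P <= N)%N ->
  \sum_(p < N) P.[z p] / node_gap p = P`_N.-1.
Proof.
move=> /lagrange_interpolation {2}->; rewrite coef_sum.
by apply: eq_bigr => p _; rewrite coefZ coef_lagrange_factor mulr1.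
Qed.

Lemma sum_exp_div_node_gap : (0 < N)%N ->
  \sum_(p < N) z p ^+ N.-1 / node_gap p = 1.
Proof.
move=> N_gt0; have := @sum_horner_div_node_gap 'X^(N.-1).
rewrite size_polyXn prednK // leqnn coefXn eqxx => /(_ isT).
by under eq_bigr do rewrite hornerXn.
Qed.

End LagrangeInterpolation.

(* Averaging: if finitely many numbers sum to 1, one of them has modulus at
   least the reciprocal of their number (the index set is nonempty since an
   empty sum is 0). *)
Lemma exists_norm_ge_inv_card (R : numFieldType) (I : finType) (w : I -> R) :
  \sum_i w i = 1 -> exists i, #|I|%:R^-1 <= `|w i|.
Proof.
move=> sum_w; have [i0 _ | I0] := pickP (@predT I); last first.
  by move: sum_w; rewrite big_pred0 // => /eqP; rewrite eq_sym oner_eq0.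
have card_gt0 : (0 < #|I|)%N by apply/card_gt0P; exists i0.
have [i big_i | small] := pickP (fun i => #|I|%:R^-1 <= `|w i|).
  by exists i.
have : `|\sum_i w i| < 1.
  apply: le_lt_trans (ler_norm_sum _ _ _) _.
  have -> : 1 = \sum_(i : I) #|I|%:R^-1 :> R.
    by rewrite sumr_const -[RHS]mulr_natr mulVf // pnatr_eq0 -lt0n.
  apply: ltr_sum => [|i _]; first by apply/hasP; exists i0; rewrite ?mem_index_enum.
  by rewrite real_ltNge ?realV ?realn ?normr_real // small.
by rewrite sum_w normr1 ltxx.
Qed.

Theorem mainTheorem8 (C : numClosedFieldType) (N : nat) (z : 'I_N -> C)
  (hN : (0 < N)%N) (hinj : injective z) (hunit : forall i, `|z i| = 1) :
  exists p0 : 'I_N, \prod_(q < N | q != p0) `|z p0 - z q| <= N%:R.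
Proof.
have [p big_term] := exists_norm_ge_inv_card (sum_exp_div_node_gap hinj hN).
exists p; rewrite -normr_prod -/(node_gap z p).
have gap_gt0 : 0 < `|node_gap z p| by rewrite normr_gt0 (node_gap_neq0 hinj).
move: big_term; rewrite card_ord normrM normrV ?unitfE ?(node_gap_neq0 hinj) //.
rewrite normrX hunit expr1n mul1r lef_pV2 ?posrE ?ltr0n //.
Qed.
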